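(* Let $T$ be a complete theory with monster model $\mathcal{U}$, $A\subseteq\mathcal{U}$ small, $\mu\in\mathfrak{M}_x(\mathcal{U})$, $\nu\in\mathfrak{M}_y(\mathcal{U})$, and suppose $\lambda\in\mathfrak{M}_{xy}(A)$ witnesses $\mu\geq_{\mathbb{E},A}\nu$. If $\lambda$ is smooth over $A$, then both $\mu$ and $\nu$ are smooth over $A$.
   Context: For $C\subseteq\mathcal{U}$, $\mathcal{L}_x(C)$ is the Boolean algebra of formulas in $x$ with parameters from $C$ modulo $T$, embedded in $\mathcal{L}_{xy}(C)$ via $\varphi(x)\mapsto\varphi(x)\wedge y=y$; $\mathfrak{M}_x(C)$ is the set of finitely additive probability measures on $\mathcal{L}_x(C)$. For $\omega\in\mathfrak{M}_{xy}(C)$, $\pi_x(\omega)(\varphi(x))=\omega(\varphi(x)\wedge y=y)$ (similarly $\pi_y$); $\omega|_D$ is restriction. $\lambda$ witnesses $\mu\geq_{\mathbb{E},A}\nu$ means $\pi_x(\lambda)=\mu|_A$ and every $\omega\in\mathfrak{M}_{xy}(\mathcal{U})$ with $\omega|_A=\lambda$ and $\pi_x(\omega)=\mu$ satisfies $\pi_y(\omega)=\nu$. A global measure is smooth over $A$ if it is the unique global measure with its restriction to $A$. A measure $\eta\in\mathfrak{M}_{xy}(A)$ is smooth over $A$ if there is a unique $\omega\in\mathfrak{M}_{xy}(\mathcal{U})$ with $\omega|_A=\eta$. *)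

From Stdlib Require Import Reals List.
Require Stdlib.Vectors.Fin.

Record Language := {
  Fun : Type;
  Rel : Type;
  fun_ar : Fun -> nat;
  rel_ar : Rel -> nat
}.

Record Structure (L : Language) := {
  dom :> Type;
  dom_inh : dom;
  fint : forall f : Fun L, (Fin.t (fun_ar L f) -> dom) -> dom;
  rint : forall r : Rel L, (Fin.t (rel_ar L r) -> dom) -> Prop
}.

Arguments dom {L}.
Arguments dom_inh {L}.
Arguments fint {L}.
Arguments rint {L}.

Inductive term (L : Language) (M : Type) : Type :=
| tvar : nat -> term L M
| tpar : M -> term L M
| tfun : forall f : Fun L, (Fin.t (fun_ar L f) -> term L M) -> term L M.

Inductive formula (L : Language) (M : Type) : Type :=
| fEq  : term L M -> term L M -> formula L M
| fRel : forall r : Rel L, (Fin.t (rel_ar L r) -> term L M) -> formula L M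
| fNeg : formula L M -> formula L M
| fAnd : formula L M -> formula L M -> formula L M
| fEx  : nat -> formula L M -> formula L M.

Arguments tvar {L M}.
Arguments tpar {L M}.
Arguments tfun {L M}.
Arguments fEq {L M}.
Arguments fRel {L M}.
Arguments fNeg {L M}.
Arguments fAnd {L M}.
Arguments fEx {L M}.

Definition env {L} (U : Structure L) := nat -> U.

Definition upd {L} {U : Structure L} (e : env U) (i : nat) (a : U) : env U :=
  fun j => if Nat.eqb j i then a else e j.

Fixpoint eval {L} (U : Structure L) (e : env U) (t : term L U) : U :=
  match t with
  | tvar i => e i
  | tpar a => a
  | tfun f args => fint U f (fun k => eval U e (args k))
  end.

Fixpoint sat {L} (U : Structure L) (e : env U) (phi : formula L U) : Prop :=
  match phi with
  | fEq t1 t2 => eval U e t1 = eval U e t2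
  | fRel r args => rint U r (fun k => eval U e (args k))
  | fNeg psi => ~ sat U e psi
  | fAnd p q => sat U e p /\ sat U e q
  | fEx i psi => exists a : U, sat U (upd e i a) psi
  end.

Fixpoint term_params {L M} (C : M -> Prop) (t : term L M) : Prop :=
  match t with
  | tvar _ => True
  | tpar a => C a
  | tfun f args => forall k, term_params C (args k)
  end.

Fixpoint form_params {L M} (C : M -> Prop) (phi : formula L M) : Prop :=
  match phi with
  | fEq t1 t2 => term_params C t1 /\ term_params C t2
  | fRel r args => forall k, term_params C (args k)
  | fNeg p => form_params C p
  | fAnd p q => form_params C p /\ form_params C q
  | fEx _ p => form_params C p
  end.

Fixpoint term_vars {L M} (V : nat -> Prop) (t : term L M) : Prop :=
  match t with
  | tvar i => V i
  | tpar _ => True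
  | tfun f args => forall k, term_vars V (args k)
  end.

Fixpoint form_vars {L M} (V : nat -> Prop) (phi : formula L M) : Prop :=
  match phi with
  | fEq t1 t2 => term_vars V t1 /\ term_vars V t2
  | fRel r args => forall k, term_vars V (args k)
  | fNeg p => form_vars V p
  | fAnd p q => form_vars V p /\ form_vars V q
  | fEx i p => form_vars (fun j => j = i \/ V j) p
  end.

Fixpoint map_term {L M} (g : M -> M) (t : term L M) : term L M :=
  match t with
  | tvar i => tvar i
  | tpar a => tpar (g a)
  | tfun f args => tfun f (fun k => map_term g (args k))
  end.

Fixpoint map_form {L M} (g : M -> M) (phi : formula L M) : formula L M :=
  match phi with
  | fEq t1 t2 => fEq (map_term g t1) (map_term g t2)
  | fRel r args => fRel r (fun k => map_term g (args k))
  | fNeg p => fNeg (map_form g p)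
  | fAnd p q => fAnd (map_form g p) (map_form g q)
  | fEx i p => fEx i (map_form g p)
  end.

Definition lt_card (X K : Type) : Prop :=
  (exists f : X -> K, forall a b, f a = f b -> a = b) /\
  ~ (exists g : K -> X, forall a b, g a = g b -> a = b).

Definition subset_type {L} (U : Structure L) (B : U -> Prop) := { b : U | B b }.

Definition saturated {L} (U : Structure L) (K : Type) : Prop :=
  forall (B : U -> Prop), lt_card (subset_type U B) K ->
  forall (n : nat) (p : formula L U -> Prop),
    (forall phi, p phi -> form_params B phi /\ form_vars (fun i => (i < n)%nat) phi) ->
    (forall l : list (formula L U), (forall phi, In phi l -> p phi) ->
        exists e : env U, forall phi, In phi l -> sat U e phi) ->
    exists e : env U, forall phi, p phi -> sat U e phi.

Definition automorphism {L} (U : Structure L) (s : U -> U) : Prop :=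
  (exists s' : U -> U, (forall a, s' (s a) = a) /\ (forall a, s (s' a) = a)) /\
  (forall f args, s (fint U f args) = fint U f (fun k => s (args k))) /\
  (forall r args, rint U r args <-> rint U r (fun k => s (args k))).

Definition elementary_on {L} (U : Structure L) (B : U -> Prop) (g : U -> U) : Prop :=
  forall (phi : formula L U) (e : env U), form_params B phi ->
    form_vars (fun _ => False) phi ->
    (sat U e phi <-> sat U e (map_form g phi)).

Definition strongly_homogeneous {L} (U : Structure L) (K : Type) : Prop :=
  forall (B : U -> Prop) (g : U -> U), lt_card (subset_type U B) K ->
    elementary_on U B g ->
    exists s, automorphism U s /\ forall b, B b -> s b = g b.

(* U is a monster model (for T = Th(U)) with respect to the cardinal |K|,
   which is uncountable and larger than the language. *)
Definition monster {L} (U : Structure L) (K : Type) : Prop :=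
  lt_card nat K /\ lt_card (Fun L) K /\ lt_card (Rel L) K /\
  saturated U K /\ strongly_homogeneous U K.

Definition small {L} (U : Structure L) (K : Type) (A : U -> Prop) : Prop :=
  lt_card (subset_type U A) K.

Definition vset {L} (U : Structure L) := env U -> Prop.

Definition sat_set {L} (U : Structure L) (phi : formula L U) : vset U :=
  fun e => sat U e phi.

(* S is an element of L_V(C): defined by a formula with free variables in V
   and parameters in C (formulas modulo equivalence in U = same set). *)
Definition definable {L} (U : Structure L) (V : nat -> Prop) (C : U -> Prop)
  (S : vset U) : Prop :=
  exists phi : formula L U, form_params C phi /\ form_vars V phi /\ S = sat_set U phi.

Definition full_set {L} (U : Structure L) : vset U := fun _ => True.
Definition everything {L} (U : Structure L) : U -> Prop := fun _ => True.

Definition keisler_measure {L} (U : Structure L) (V : nat -> Prop) (C : U -> Prop)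
  (mu : vset U -> R) : Prop :=
  (forall S, definable U V C S -> (0 <= mu S)%R) /\
  mu (full_set U) = 1%R /\
  (forall S T, definable U V C S -> definable U V C T ->
     (forall e, ~ (S e /\ T e)) ->
     mu (fun e => S e \/ T e) = (mu S + mu T)%R).

Definition agree {L} (U : Structure L) (V : nat -> Prop) (C : U -> Prop)
  (mu mu' : vset U -> R) : Prop :=
  forall S, definable U V C S -> mu S = mu' S.

(* Variable tuples: x = (v_0,..,v_{n-1}), y = (v_n,..,v_{n+m-1}). *)
Definition Vx (n : nat) : nat -> Prop := fun i => (i < n)%nat.
Definition Vy (n m : nat) : nat -> Prop := fun i => (n <= i /\ i < n + m)%nat.
Definition Vxy (n m : nat) : nat -> Prop := fun i => (i < n + m)%nat.

(* Since a set defined by phi(x) (resp. psi(y)) is, as a set of assignments,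
   the same set as the one defined by phi(x) /\ y = y (resp. psi(y) /\ x = x),
   pi_x(omega) is omega read on L_x-definable sets; pi_x(omega) = mu|_C is
   thus "agree (Vx n) C omega mu", and likewise for pi_y. *)

Definition smooth_global {L} (U : Structure L) (V : nat -> Prop) (A : U -> Prop)
  (mu : vset U -> R) : Prop :=
  forall mu', keisler_measure U V (everything U) mu' -> agree U V A mu' mu ->
    agree U V (everything U) mu' mu.

Definition smooth_over {L} (U : Structure L) (V : nat -> Prop) (A : U -> Prop)
  (eta : vset U -> R) : Prop :=
  (exists w, keisler_measure U V (everything U) w /\ agree U V A w eta) /\
  (forall w1 w2, keisler_measure U V (everything U) w1 ->
     keisler_measure U V (everything U) w2 ->
     agree U V A w1 eta -> agree U V A w2 eta -> agree U V (everything U) w1 w2).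

Definition witnesses_E {L} (U : Structure L) (n m : nat) (A : U -> Prop)
  (lam mu nu : vset U -> R) : Prop :=
  agree U (Vx n) A lam mu /\
  forall w, keisler_measure U (Vxy n m) (everything U) w ->
    agree U (Vxy n m) A w lam -> agree U (Vx n) (everything U) w mu ->
    agree U (Vy n m) (everything U) w nu.

(* Let w be the unique global extension of lam.  A finitely additive
   probability measure on a Boolean algebra of sets extends to all sets, even
   with its outer (or inner) measure prescribed on one further set c
   (Los-Marczewski, via Zorn's lemma).  Uniqueness of w therefore forces the
   inner and outer lam-measures of every U-definable set c to equal w(c).  If an
   A-definable a(x,y) implies a U-definable S(x), then the projection exists y a
   is A-definable, lies between a and S, and has lam-measure at least lam(a); so
   any rho on L_x(U) agreeing with lam on L_x(A) is squeezed between the inner and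
   outer lam-measures, i.e. rho = pi_x(w).  Applied to mu and to every mu' that
   agrees with mu over A, this shows that mu is smooth.  In particular
   pi_x(w) = mu, so the witness property gives pi_y(w) = nu, and the same
   squeeze in the y-variables shows that nu is smooth. *)

From Stdlib Require Import Reals Lra Lia List Classical ClassicalEpsilon
  FunctionalExtensionality PropExtensionality.
From mathcomp Require classical_sets boolp.

Open Scope R_scope.

Lemma zorn_preorder (T : Type) (t0 : T) (le : T -> T -> Prop) :
  (forall t, le t t) -> (forall r s t, le r s -> le s t -> le r t) ->
  (forall C : T -> Prop, (forall s t, C s -> C t -> le s t \/ le t s) ->
     exists t, forall s, C s -> le s t) ->
  exists t, forall s, le t s -> le s t.
Proof.
  intros Hrefl Htrans Hchain.
  destruct (@classical_sets.ZL_preorder T t0 (fun s t => boolp.asbool (le s t)))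
    as [t Ht].
  - intro t. apply boolp.asboolT, Hrefl.
  - intros r s t Hrs Hst. apply boolp.asboolT.
    apply (Htrans r s t); apply boolp.asboolW; assumption.
  - intros C HC. destruct (Hchain C) as [t Ht].
    + intros s t Cs Ct.
      destruct (HC s t Cs Ct); [left | right]; apply boolp.asboolW; assumption.
    + exists t. intros s Cs. apply boolp.asboolT, Ht, Cs.
  - exists t. intros s Hs. apply boolp.asboolW, Ht, boolp.asboolT, Hs.
Qed.

Lemma set_ext {X : Type} (S T : X -> Prop) : (forall x, S x <-> T x) -> S = T.
Proof. intro H. extensionality x. apply propositional_extensionality, H. Qed.

Definition algebra {X : Type} (D : (X -> Prop) -> Prop) : Prop :=
  D (fun _ => True) /\ (forall S, D S -> D (fun x => ~ S x)) /\
  (forall S T, D S -> D T -> D (fun x => S x /\ T x)).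

Definition fa_probability {X : Type} (D : (X -> Prop) -> Prop)
  (m : (X -> Prop) -> R) : Prop :=
  (forall S, D S -> 0 <= m S) /\ m (fun _ => True) = 1 /\
  (forall S T, D S -> D T -> (forall x, ~ (S x /\ T x)) ->
     m (fun x => S x \/ T x) = m S + m T).

Definition extends {X : Type} (D : (X -> Prop) -> Prop) (m : (X -> Prop) -> R)
  (D' : (X -> Prop) -> Prop) (m' : (X -> Prop) -> R) : Prop :=
  forall S, D S -> D' S /\ m' S = m S.

Lemma algebra_all (X : Type) : algebra (fun _ : X -> Prop => True).
Proof. repeat split. Qed.

Lemma fa_probability_sub {X : Type} (D D' : (X -> Prop) -> Prop) m :
  (forall S, D' S -> D S) -> fa_probability D m -> fa_probability D' m.
Proof. intros Hsub [Hge0 [HT HU]]. repeat split; auto. Qed.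

Lemma extends_refl {X : Type} (D : (X -> Prop) -> Prop) m : extends D m D m.
Proof. intros S HS. auto. Qed.

Lemma extends_trans {X : Type} (D1 D2 D3 : (X -> Prop) -> Prop) m1 m2 m3 :
  extends D1 m1 D2 m2 -> extends D2 m2 D3 m3 -> extends D1 m1 D3 m3.
Proof.
  intros H12 H23 S HS. destruct (H12 S HS) as [HS2 E12].
  destruct (H23 S HS2) as [HS3 E23]. split; congruence.
Qed.

Section Algebra.
Context {X : Type} {D : (X -> Prop) -> Prop} (HD : algebra D).

Lemma algebraT : D (fun _ => True).
Proof. apply HD. Qed.

Lemma algebraC S : D S -> D (fun x => ~ S x).
Proof. apply HD. Qed.

Lemma algebraI S T : D S -> D T -> D (fun x => S x /\ T x).
Proof. apply HD. Qed.

Lemma algebraD S T : D S -> D T -> D (fun x => S x /\ ~ T x).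
Proof. auto using algebraI, algebraC. Qed.

Lemma algebra0 : D (fun _ => False).
Proof.
  rewrite <- (set_ext (fun _ => ~ True)) by tauto. apply algebraC, algebraT.
Qed.

Lemma algebraU S T : D S -> D T -> D (fun x => S x \/ T x).
Proof.
  intros HS HT. rewrite <- (set_ext (fun x => ~ (~ S x /\ ~ T x)))
    by (intro x; destruct (classic (S x)); tauto).
  auto using algebraC, algebraI.
Qed.

Context {m : (X -> Prop) -> R} (Hm : fa_probability D m).

Lemma measure_ge0 S : D S -> 0 <= m S.
Proof. apply Hm. Qed.

Lemma measureT : m (fun _ => True) = 1.
Proof. apply Hm. Qed.

Lemma measureU S T : D S -> D T -> (forall x, ~ (S x /\ T x)) ->
  m (fun x => S x \/ T x) = m S + m T.
Proof. apply Hm. Qed.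

Lemma measureC S : D S -> m (fun x => ~ S x) = 1 - m S.
Proof.
  intro HS.
  assert (H : m (fun x => S x \/ ~ S x) = m S + m (fun x => ~ S x))
    by (apply measureU; auto using algebraC; tauto).
  rewrite (set_ext (fun x => S x \/ ~ S x) (fun _ => True)) in H
    by (intro x; destruct (classic (S x)); tauto).
  rewrite measureT in H. lra.
Qed.

Lemma measure_split S T : D S -> D T ->
  m T = m (fun x => T x /\ S x) + m (fun x => T x /\ ~ S x).
Proof.
  intros HS HT. rewrite <- measureU by (auto using algebraI, algebraD; tauto).
  f_equal. apply set_ext. intro x. destruct (classic (S x)); tauto.
Qed.

Lemma le_measure S T : D S -> D T -> (forall x, S x -> T x) -> m S <= m T.
Proof.
  intros HS HT Hsub. rewrite (measure_split S T HS HT).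
  rewrite (set_ext (fun x => T x /\ S x) S) by (intro x; specialize (Hsub x); tauto).
  assert (0 <= m (fun x => T x /\ ~ S x)) by auto using measure_ge0, algebraD.
  lra.
Qed.

Lemma measure_subadd S T : D S -> D T -> m (fun x => S x \/ T x) <= m S + m T.
Proof.
  intros HS HT.
  rewrite (set_ext (fun x => S x \/ T x) (fun x => S x \/ (T x /\ ~ S x)))
    by (intro x; destruct (classic (S x)); tauto).
  rewrite measureU by (auto using algebraD; tauto).
  assert (m (fun x => T x /\ ~ S x) <= m T) by (apply le_measure; auto using algebraD; tauto).
  lra.
Qed.

End Algebra.

Definition covers {X : Type} (D : (X -> Prop) -> Prop) (m : (X -> Prop) -> R)
  (Z : X -> Prop) (r : R) : Prop :=
  exists d, D d /\ (forall x, Z x -> d x) /\ r = m d.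

Definition is_glb (E : R -> Prop) (r : R) : Prop :=
  (forall s, E s -> r <= s) /\ (forall t, (forall s, E s -> t <= s) -> t <= r).

Definition outer {X : Type} (D : (X -> Prop) -> Prop) (m : (X -> Prop) -> R)
  (Z : X -> Prop) : R :=
  epsilon (inhabits 0) (is_glb (covers D m Z)).

Definition inner {X : Type} (D : (X -> Prop) -> Prop) (m : (X -> Prop) -> R)
  (Z : X -> Prop) : R :=
  1 - outer D m (fun x => ~ Z x).

Section Outer.
Context {X : Type} {D : (X -> Prop) -> Prop} (HD : algebra D)
  {m : (X -> Prop) -> R} (Hm : fa_probability D m).

Lemma outer_spec Z : is_glb (covers D m Z) (outer D m Z).
Proof.
  unfold outer. apply epsilon_spec.
  destruct (completeness (fun r => covers D m Z (- r))) as [l [Hub Hlub]].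
  - exists 0. intros r [d [Hd [_ E]]].
    assert (0 <= m d) by (apply (measure_ge0 Hm); auto). lra.
  - exists (- 1). exists (fun _ => True). rewrite measureT by exact Hm.
    split; [apply (algebraT HD) | split; [auto | lra]].
  - exists (- l). split.
    + intros s Hs. assert (- s <= l) by (apply Hub; cbv beta; rewrite Ropp_involutive; exact Hs).
      lra.
    + intros t Ht. assert (l <= - t).
      { apply Hlub. intros r Hr. specialize (Ht _ Hr). lra. }
      lra.
Qed.

Lemma outer_le Z d : D d -> (forall x, Z x -> d x) -> outer D m Z <= m d.
Proof. intros Hd Hsub. apply (proj1 (outer_spec Z)). exists d. auto. Qed.

Lemma le_outer Z r :
  (forall d, D d -> (forall x, Z x -> d x) -> r <= m d) -> r <= outer D m Z.
Proof.
  intro H. apply (proj2 (outer_spec Z)). intros s [d [Hd [Hsub ->]]]. auto.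
Qed.

Lemma outer_mem d : D d -> outer D m d = m d.
Proof.
  intro Hd. apply Rle_antisym.
  - apply outer_le; auto.
  - apply le_outer. intros d' Hd' Hsub. apply (le_measure HD Hm); auto.
Qed.

Lemma outer_ge0 Z : 0 <= outer D m Z.
Proof. apply le_outer. intros d Hd _. apply (measure_ge0 Hm); auto. Qed.

Lemma outer_approx Z eps : 0 < eps ->
  exists d, D d /\ (forall x, Z x -> d x) /\ m d < outer D m Z + eps.
Proof.
  intro Heps. apply NNPP. intro Hnot.
  assert (outer D m Z + eps <= outer D m Z).
  { apply le_outer. intros d Hd Hsub. apply Rnot_lt_le. intro Hlt.
    apply Hnot. exists d. auto. }
  lra.
Qed.

Lemma outer_subadd Z W :
  outer D m (fun x => Z x \/ W x) <= outer D m Z + outer D m W.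
Proof.
  apply Rnot_lt_le. intro Hlt.
  set (eps := (outer D m (fun x => Z x \/ W x) - outer D m Z - outer D m W) / 2).
  assert (Heps : 0 < eps) by (unfold eps; lra).
  destruct (outer_approx Z eps Heps) as [d1 [Hd1 [Hsub1 Hlt1]]].
  destruct (outer_approx W eps Heps) as [d2 [Hd2 [Hsub2 Hlt2]]].
  assert (outer D m (fun x => Z x \/ W x) <= m (fun x => d1 x \/ d2 x)).
  { apply outer_le; [apply (algebraU HD); auto | firstorder]. }
  assert (m (fun x => d1 x \/ d2 x) <= m d1 + m d2) by (apply (measure_subadd HD Hm); auto).
  unfold eps in *. lra.
Qed.

Lemma outer_disjointU d W : D d -> (forall x, ~ (d x /\ W x)) ->
  outer D m (fun x => d x \/ W x) = m d + outer D m W.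
Proof.
  intros Hd Hdisj. apply Rle_antisym.
  - rewrite <- (outer_mem d Hd). apply outer_subadd.
  - apply le_outer. intros g Hg Hsub.
    rewrite (measure_split HD Hm d g Hd Hg).
    rewrite (set_ext (fun x => g x /\ d x) d) by (intro x; specialize (Hsub x); tauto).
    assert (outer D m W <= m (fun x => g x /\ ~ d x)).
    { apply outer_le; [apply (algebraD HD); auto |].
      intros x HW. split; [apply Hsub; auto | intro; apply (Hdisj x); auto]. }
    lra.
Qed.

Lemma outer_traceU c d1 d2 : D d1 -> D d2 -> (forall x, ~ (d1 x /\ d2 x)) ->
  outer D m (fun x => (d1 x \/ d2 x) /\ c x)
  = outer D m (fun x => d1 x /\ c x) + outer D m (fun x => d2 x /\ c x).
Proof.
  intros Hd1 Hd2 Hdisj. apply Rle_antisym.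
  - rewrite (set_ext _ (fun x => (d1 x /\ c x) \/ (d2 x /\ c x))) by (intro x; tauto).
    apply outer_subadd.
  - apply le_outer. intros g Hg Hsub.
    assert (outer D m (fun x => d1 x /\ c x) <= m (fun x => g x /\ d1 x)).
    { apply outer_le; [apply (algebraI HD); auto | firstorder]. }
    assert (outer D m (fun x => d2 x /\ c x) <= m (fun x => g x /\ d2 x)).
    { apply outer_le; [apply (algebraI HD); auto | firstorder]. }
    assert (Hg_split : m (fun x => (g x /\ d1 x) \/ (g x /\ d2 x)) <= m g).
    { apply (le_measure HD Hm); [apply (algebraU HD); apply (algebraI HD) | | ];
        auto; tauto. }
    rewrite (measureU Hm) in Hg_split by (try apply (algebraI HD); firstorder).
    lra.
Qed.

Lemma outer_compl_traceU c e : D e ->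
  m e - outer D m (fun x => e x /\ c x) = 1 - outer D m (fun x => ~ e x \/ c x).
Proof.
  intro He.
  rewrite (set_ext (fun x => ~ e x \/ c x) (fun x => ~ e x \/ (e x /\ c x)))
    by (intro x; destruct (classic (e x)); tauto).
  rewrite outer_disjointU by (first [apply (algebraC HD), He | tauto]).
  rewrite (measureC HD Hm e He). lra.
Qed.

Lemma inner_le Z r :
  (forall d, D d -> (forall x, d x -> Z x) -> m d <= r) -> inner D m Z <= r.
Proof.
  intro Hbound. unfold inner.
  assert (1 - r <= outer D m (fun x => ~ Z x)); [| lra].
  apply le_outer. intros d Hd Hsub.
  assert (Hcompl : m (fun x => ~ d x) <= r).
  { apply Hbound; [apply (algebraC HD), Hd |].
    intros x Hnd. apply NNPP. intro HnZ. apply Hnd, Hsub, HnZ. }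
  rewrite (measureC HD Hm d Hd) in Hcompl. lra.
Qed.

Section Adjoin.
Variable c : X -> Prop.

Definition adjoin (Z : X -> Prop) : Prop :=
  exists d e, D d /\ D e /\ Z = (fun x => (d x /\ c x) \/ (e x /\ ~ c x)).

Definition adjoin_measure (Z : X -> Prop) : R :=
  outer D m (fun x => Z x /\ c x) + (1 - outer D m (fun x => ~ Z x \/ c x)).

Lemma adjoin_measure_split d e : D d -> D e ->
  adjoin_measure (fun x => (d x /\ c x) \/ (e x /\ ~ c x))
  = outer D m (fun x => d x /\ c x) + (m e - outer D m (fun x => e x /\ c x)).
Proof.
  intros Hd He. unfold adjoin_measure.
  rewrite (set_ext _ (fun x => d x /\ c x)) by (intro x; tauto).
  rewrite (set_ext (fun x => ~ ((d x /\ c x) \/ (e x /\ ~ c x)) \/ c x)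
                   (fun x => ~ e x \/ c x))
    by (intro x; destruct (classic (c x)); tauto).
  rewrite (outer_compl_traceU c e He). reflexivity.
Qed.

Lemma adjoin_algebra : algebra adjoin.
Proof.
  split; [| split].
  - exists (fun _ => True), (fun _ => True).
    split; [apply (algebraT HD) | split; [apply (algebraT HD) |]].
    apply set_ext. intro x. destruct (classic (c x)); tauto.
  - intros S [d [e [Hd [He ->]]]].
    exists (fun x => ~ d x), (fun x => ~ e x).
    split; [apply (algebraC HD), Hd | split; [apply (algebraC HD), He |]].
    apply set_ext. intro x. destruct (classic (c x)); tauto.
  - intros S T [d [e [Hd [He ->]]]] [d' [e' [Hd' [He' ->]]]].
    exists (fun x => d x /\ d' x), (fun x => e x /\ e' x).
    split; [apply (algebraI HD); auto | split; [apply (algebraI HD); auto |]].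
    apply set_ext. intro x. destruct (classic (c x)); tauto.
Qed.

Lemma adjoin_additive d1 e1 d2 e2 : D d1 -> D e1 -> D d2 -> D e2 ->
  (forall x, ~ (((d1 x /\ c x) \/ (e1 x /\ ~ c x)) /\
                ((d2 x /\ c x) \/ (e2 x /\ ~ c x)))) ->
  adjoin_measure (fun x => ((d1 x /\ c x) \/ (e1 x /\ ~ c x)) \/
                           ((d2 x /\ c x) \/ (e2 x /\ ~ c x)))
  = adjoin_measure (fun x => (d1 x /\ c x) \/ (e1 x /\ ~ c x))
    + adjoin_measure (fun x => (d2 x /\ c x) \/ (e2 x /\ ~ c x)).
Proof.
  intros Hd1 He1 Hd2 He2 Hdisj.
  set (d2' := fun x => d2 x /\ ~ d1 x).
  set (e2' := fun x => e2 x /\ ~ e1 x).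
  assert (Hd2' : D d2') by (apply (algebraD HD); auto).
  assert (He2' : D e2') by (apply (algebraD HD); auto).
  rewrite (set_ext _ (fun x => ((fun x => d1 x \/ d2' x) x /\ c x)
                               \/ ((fun x => e1 x \/ e2' x) x /\ ~ c x)))
    by (intro x; unfold d2', e2'; destruct (classic (c x)), (classic (d1 x)),
        (classic (e1 x)); tauto).
  rewrite !adjoin_measure_split by (try apply (algebraU HD); auto).
  rewrite (outer_traceU c d1 d2' Hd1 Hd2') by (unfold d2'; tauto).
  rewrite (outer_traceU c e1 e2' He1 He2') by (unfold e2'; tauto).
  rewrite (measureU Hm e1 e2' He1 He2') by (unfold e2'; tauto).
  (* on [c] the sets [d1], [d2] are disjoint, and off [c] so are [e1], [e2] *)
  assert (Hd : outer D m (fun x => d2' x /\ c x) = outer D m (fun x => d2 x /\ c x)).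
  { f_equal. apply set_ext. intro x. specialize (Hdisj x). unfold d2'. tauto. }
  assert (He : m e2' - outer D m (fun x => e2' x /\ c x)
               = m e2 - outer D m (fun x => e2 x /\ c x)).
  { rewrite (outer_compl_traceU c e2' He2'), (outer_compl_traceU c e2 He2).
    do 2 f_equal. apply set_ext. intro x. specialize (Hdisj x). unfold e2'.
    destruct (classic (c x)), (classic (e1 x)); tauto. }
  lra.
Qed.

Lemma adjoin_fa_probability : fa_probability adjoin adjoin_measure.
Proof.
  split; [| split].
  - intros S [d [e [Hd [He ->]]]]. rewrite adjoin_measure_split by auto.
    assert (0 <= outer D m (fun x => d x /\ c x)) by apply outer_ge0.
    assert (outer D m (fun x => e x /\ c x) <= m e) by (apply outer_le; [auto | tauto]).
    lra.
  - unfold adjoin_measure.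
    rewrite (set_ext (fun x => ~ True \/ c x) c) by tauto.
    rewrite (set_ext (fun x => True /\ c x) c) by tauto. lra.
  - intros S T [d1 [e1 [Hd1 [He1 ->]]]] [d2 [e2 [Hd2 [He2 ->]]]].
    apply adjoin_additive; auto.
Qed.

Lemma adjoin_extends : extends D m adjoin adjoin_measure.
Proof.
  intros S HS.
  assert (ES : S = fun x => (S x /\ c x) \/ (S x /\ ~ c x))
    by (apply set_ext; intro x; destruct (classic (c x)); tauto).
  split.
  - exists S, S. auto.
  - rewrite ES at 1. rewrite adjoin_measure_split by auto. lra.
Qed.

End Adjoin.

Lemma one_step_extension c :
  exists D' m', algebra D' /\ fa_probability D' m' /\ extends D m D' m' /\
    D' c /\ m' c = outer D m c.
Proof.
  exists (adjoin c), (adjoin_measure c).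
  split; [apply adjoin_algebra | split; [apply adjoin_fa_probability |]].
  split; [apply adjoin_extends | split].
  - exists (fun _ => True), (fun _ => False).
    split; [apply (algebraT HD) | split; [apply (algebra0 HD) |]].
    apply set_ext. intro x. tauto.
  - unfold adjoin_measure.
    rewrite (set_ext (fun x => c x /\ c x) c) by tauto.
    rewrite (set_ext (fun x => ~ c x \/ c x) (fun _ => True))
      by (intro x; destruct (classic (c x)); tauto).
    rewrite (outer_mem _ (algebraT HD)), (measureT Hm). lra.
Qed.

End Outer.

Section TotalExtension.
Context {X : Type} {D0 : (X -> Prop) -> Prop} (HD0 : algebra D0)
  {m0 : (X -> Prop) -> R} (Hm0 : fa_probability D0 m0).

Definition partial_extension :=
  {p : ((X -> Prop) -> Prop) * ((X -> Prop) -> R) |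
    algebra (fst p) /\ fa_probability (fst p) (snd p) /\ extends D0 m0 (fst p) (snd p)}.

Definition pdom (p : partial_extension) := fst (proj1_sig p).
Definition pmeas (p : partial_extension) := snd (proj1_sig p).

Definition extension_le (p q : partial_extension) : Prop :=
  extends (pdom p) (pmeas p) (pdom q) (pmeas q).

Section Chain.
Variable C : partial_extension -> Prop.
Hypothesis C_total : forall p q, C p -> C q -> extension_le p q \/ extension_le q p.
Variable p0 : partial_extension.
Hypothesis C_p0 : C p0.

Definition chain_dom (S : X -> Prop) : Prop := exists p, C p /\ pdom p S.

Definition chain_measure (S : X -> Prop) : R :=
  epsilon (inhabits 0) (fun r => exists p, C p /\ pdom p S /\ pmeas p S = r).

Lemma chain_measure_eq p S : C p -> pdom p S -> chain_measure S = pmeas p S.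
Proof.
  intros Cp HS. unfold chain_measure.
  destruct (epsilon_spec (inhabits 0)
              (fun r => exists p, C p /\ pdom p S /\ pmeas p S = r)
              (ex_intro _ _ (ex_intro _ p (conj Cp (conj HS eq_refl)))))
    as [q [Cq [HSq <-]]].
  destruct (C_total p q Cp Cq) as [Hpq | Hqp].
  - apply (Hpq S HS).
  - symmetry. apply (Hqp S HSq).
Qed.

Lemma chain_dom2 S T : chain_dom S -> chain_dom T ->
  exists p, C p /\ pdom p S /\ pdom p T.
Proof.
  intros [p [Cp HS]] [q [Cq HT]].
  destruct (C_total p q Cp Cq) as [Hpq | Hqp].
  - exists q. split; [auto | split; [apply (Hpq S HS) | auto]].
  - exists p. split; [auto | split; [auto | apply (Hqp T HT)]].
Qed.

Lemma chain_union_extension :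
  algebra chain_dom /\ fa_probability chain_dom chain_measure /\
  extends D0 m0 chain_dom chain_measure.
Proof.
  destruct (proj2_sig p0) as [HD [Hm Hext]].
  fold (pdom p0) (pmeas p0) in HD, Hm, Hext.
  split; [| split].
  - split; [| split].
    + exists p0. split; [auto | apply (algebraT HD)].
    + intros S [p [Cp HS]]. exists p. split; auto.
      apply (algebraC (proj1 (proj2_sig p))), HS.
    + intros S T HS HT. destruct (chain_dom2 S T HS HT) as [p [Cp [HSp HTp]]].
      exists p. split; auto. apply (algebraI (proj1 (proj2_sig p))); auto.
  - split; [| split].
    + intros S [p [Cp HS]]. rewrite (chain_measure_eq p S Cp HS).
      apply (measure_ge0 (proj1 (proj2 (proj2_sig p)))), HS.
    + rewrite (chain_measure_eq p0 _ C_p0 (algebraT HD)). apply (measureT Hm).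
    + intros S T HS HT Hdisj.
      destruct (chain_dom2 S T HS HT) as [p [Cp [HSp HTp]]].
      destruct (proj2_sig p) as [HDp [Hmp _]].
      rewrite (chain_measure_eq p S Cp HSp), (chain_measure_eq p T Cp HTp).
      rewrite (chain_measure_eq p _ Cp (algebraU HDp S T HSp HTp)).
      apply (measureU Hmp); auto.
  - intros S HS. destruct (Hext S HS) as [HSp0 E]. split.
    + exists p0. auto.
    + rewrite (chain_measure_eq p0 S C_p0 HSp0). exact E.
Qed.

Lemma chain_upper_bound : exists q, forall p, C p -> extension_le p q.
Proof.
  exists (exist _ (chain_dom, chain_measure) chain_union_extension).
  intros p Cp S HS. split.
  - exists p. auto.
  - apply (chain_measure_eq p S Cp HS).
Qed.

End Chain.

Lemma total_extension :
  exists m, fa_probability (fun _ => True) m /\ forall S, D0 S -> m S = m0 S.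
Proof.
  set (base := exist _ (D0, m0) (conj HD0 (conj Hm0 (extends_refl D0 m0)))
               : partial_extension).
  destruct (zorn_preorder partial_extension base extension_le) as [t Hmax].
  - intro p. apply extends_refl.
  - intros p q r. apply extends_trans.
  - intros C C_total. destruct (classic (exists p, C p)) as [[p0 C_p0] | Hempty].
    + apply (chain_upper_bound C C_total p0 C_p0).
    + exists base. intros p Cp. exfalso. eauto.
  - destruct (proj2_sig t) as [HD [Hm Hext]].
    fold (pdom t) (pmeas t) in HD, Hm, Hext.
    assert (Htotal : forall S, pdom t S).
    { intro S.
      destruct (one_step_extension HD Hm S) as [D' [m' [HD' [Hm' [Ht' [HS _]]]]]].
      set (q := exist _ (D', m') (conj HD' (conj Hm' (extends_trans _ _ _ _ _ _ Hext Ht')))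
                : partial_extension).
      apply (Hmax q Ht' S HS). }
    exists (pmeas t). split.
    + apply (fa_probability_sub (pdom t)); auto.
    + intros S HS. apply (Hext S HS).
Qed.

End TotalExtension.

Lemma outer_extension {X : Type} {D : (X -> Prop) -> Prop} (HD : algebra D)
  {m : (X -> Prop) -> R} (Hm : fa_probability D m) c :
  exists m', fa_probability (fun _ => True) m' /\ (forall S, D S -> m' S = m S) /\
    m' c = outer D m c.
Proof.
  destruct (one_step_extension HD Hm c) as [D' [m' [HD' [Hm' [Hext [Hc Hmc]]]]]].
  destruct (total_extension HD' Hm') as [m'' [Hm'' Hext'']].
  exists m''. split; [auto | split].
  - intros S HS. destruct (Hext S HS) as [HS' E]. rewrite (Hext'' S HS'). exact E.
  - rewrite (Hext'' c Hc). exact Hmc.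
Qed.

Lemma inner_extension {X : Type} {D : (X -> Prop) -> Prop} (HD : algebra D)
  {m : (X -> Prop) -> R} (Hm : fa_probability D m) c :
  exists m', fa_probability (fun _ => True) m' /\ (forall S, D S -> m' S = m S) /\
    m' c = inner D m c.
Proof.
  destruct (outer_extension HD Hm (fun x => ~ c x)) as [m' [Hm' [Hext Hmc]]].
  exists m'. split; [auto | split; [auto |]].
  unfold inner. rewrite <- Hmc, (measureC (algebra_all X) Hm' c I). lra.
Qed.

Section Syntax.
Context {L : Language} (U : Structure L).

Lemma term_vars_mono (V V' : nat -> Prop) (t : term L U) :
  (forall i, V i -> V' i) -> term_vars V t -> term_vars V' t.
Proof. induction t; simpl; auto. Qed.

Lemma form_vars_mono (phi : formula L U) : forall V V' : nat -> Prop,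
  (forall i, V i -> V' i) -> form_vars V phi -> form_vars V' phi.
Proof.
  induction phi; intros V V' Hsub H; simpl in *.
  - destruct H. split; eapply term_vars_mono; eauto.
  - intro k. eapply term_vars_mono; eauto.
  - eauto.
  - destruct H. split; eauto.
  - eapply IHphi; [| exact H]. intros i [E | Vi]; auto.
Qed.

Lemma term_params_mono (C C' : U -> Prop) (t : term L U) :
  (forall a, C a -> C' a) -> term_params C t -> term_params C' t.
Proof. induction t; simpl; auto. Qed.

Lemma form_params_mono (C C' : U -> Prop) (phi : formula L U) :
  (forall a, C a -> C' a) -> form_params C phi -> form_params C' phi.
Proof.
  intro Hsub. induction phi; intro H; simpl in *; try tauto.
  - destruct H. split; eapply term_params_mono; eauto.
  - intro k. eapply term_params_mono; eauto.
Qed.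

Lemma definable_mono V V' C C' (S : vset U) :
  (forall i, V i -> V' i) -> (forall a, C a -> C' a) ->
  definable U V C S -> definable U V' C' S.
Proof.
  intros HV HC [phi [Hp [Hv ->]]]. exists phi.
  split; [eapply form_params_mono | split; [eapply form_vars_mono |]]; eauto.
Qed.

Lemma agree_mono V V' C C' (m1 m2 : vset U -> R) :
  (forall i, V i -> V' i) -> (forall a, C a -> C' a) ->
  agree U V' C' m1 m2 -> agree U V C m1 m2.
Proof. intros HV HC H S HS. apply H. eapply definable_mono; eauto. Qed.

Lemma agree_sym V C (m1 m2 : vset U -> R) : agree U V C m1 m2 -> agree U V C m2 m1.
Proof. intros H S HS. symmetry. auto. Qed.

Lemma eval_agree V (t : term L U) (e1 e2 : env U) :
  term_vars V t -> (forall i, V i -> e1 i = e2 i) -> eval U e1 t = eval U e2 t.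
Proof.
  induction t; simpl; intros Hv Heq; auto.
  f_equal. extensionality k. auto.
Qed.

Lemma sat_agree (phi : formula L U) : forall V (e1 e2 : env U),
  form_vars V phi -> (forall i, V i -> e1 i = e2 i) -> (sat U e1 phi <-> sat U e2 phi).
Proof.
  induction phi; intros V e1 e2 Hv Heq; simpl in *.
  - destruct Hv. rewrite (eval_agree V t e1 e2), (eval_agree V t0 e1 e2); tauto.
  - replace (fun k => eval U e1 (t k)) with (fun k => eval U e2 (t k)); [tauto |].
    extensionality k. symmetry. apply (eval_agree V); auto.
  - rewrite (IHphi V e1 e2); tauto.
  - rewrite (IHphi1 V e1 e2), (IHphi2 V e1 e2); tauto.
  - assert (Hupd : forall a i, i = n \/ V i -> upd e1 n a i = upd e2 n a i).
    { intros a i Hi. unfold upd. destruct (Nat.eqb_spec i n); auto.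
      destruct Hi; [contradiction | auto]. }
    split; intros [a H]; exists a; eapply (IHphi _ _ _ Hv (Hupd a)); exact H.
Qed.

Lemma definable_algebra V C : algebra (definable U V C).
Proof.
  split; [| split].
  - exists (fEx 0 (fEq (tvar 0) (tvar 0))). simpl.
    split; [tauto | split; [tauto |]].
    apply set_ext. intro e. unfold sat_set. simpl. split; auto.
    intros _. exists (e 0%nat). reflexivity.
  - intros S [phi [Hp [Hv ->]]]. exists (fNeg phi). auto.
  - intros S T [phi [Hp [Hv ->]]] [psi [Hp' [Hv' ->]]].
    exists (fAnd phi psi). simpl. auto.
Qed.

Fixpoint exists_list (zs : list nat) (phi : formula L U) : formula L U :=
  match zs with
  | nil => phi
  | z :: zs' => fEx z (exists_list zs' phi)
  end.

Lemma exists_list_params C zs phi :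
  form_params C phi -> form_params C (exists_list zs phi).
Proof. induction zs; simpl; auto. Qed.

Lemma exists_list_vars zs : forall (V W : nat -> Prop) phi,
  (forall i, V i -> W i \/ In i zs) -> form_vars V phi ->
  form_vars W (exists_list zs phi).
Proof.
  induction zs as [| z zs IH]; simpl; intros V W phi Hsub H.
  - eapply form_vars_mono; [| exact H]. intros i Vi. destruct (Hsub i Vi); tauto.
  - apply (IH V); auto. intros i Vi. destruct (Hsub i Vi) as [Wi | [E | Ei]]; auto.
Qed.

Lemma exists_list_intro zs phi (e : env U) :
  sat U e phi -> sat U e (exists_list zs phi).
Proof.
  induction zs as [| z zs IH]; simpl; auto. intro H. exists (e z).
  replace (upd e z (e z)) with e; auto.
  extensionality j. unfold upd. destruct (Nat.eqb_spec j z); subst; auto.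
Qed.

Lemma exists_list_elim zs phi : forall e : env U, sat U e (exists_list zs phi) ->
  exists e', sat U e' phi /\ (forall i, ~ In i zs -> e' i = e i).
Proof.
  induction zs as [| z zs IH]; simpl; intros e H.
  - exists e. auto.
  - destruct H as [a H]. destruct (IH _ H) as [e' [Hsat Heq]].
    exists e'. split; auto. intros i Hi. rewrite Heq by tauto.
    unfold upd. destruct (Nat.eqb_spec i z); [subst; tauto | auto].
Qed.

Definition proj_vars (V W : nat -> Prop) (zs : list nat) : Prop :=
  (forall i, V i -> W i \/ In i zs) /\ (forall i, W i -> V i /\ ~ In i zs).

Lemma definable_projection V W zs C (a : vset U) :
  proj_vars V W zs -> definable U V C a ->
  exists p, definable U W C p /\ (forall e, a e -> p e) /\
    forall S, definable U W (everything U) S -> (forall e, a e -> S e) ->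
      forall e, p e -> S e.
Proof.
  intros [Hcover Hdisj] [phi [Hp [Hv ->]]].
  exists (sat_set U (exists_list zs phi)). split; [| split].
  - exists (exists_list zs phi).
    split; [apply exists_list_params; auto | split; [apply (exists_list_vars zs V); auto |]].
    reflexivity.
  - intros e. apply exists_list_intro.
  - intros S [chi [_ [Hvc ->]]] Hsub e He.
    destruct (exists_list_elim zs phi e He) as [e' [He' Heq]].
    apply (sat_agree chi W e' e Hvc); [| exact (Hsub e' He')].
    intros i Wi. apply Heq, Hdisj, Wi.
Qed.

End Syntax.

Lemma proj_vars_x n m : proj_vars (Vxy n m) (Vx n) (seq n m).
Proof. unfold proj_vars, Vxy, Vx. split; intros i Hi; rewrite in_seq; lia. Qed.

Lemma proj_vars_y n m : proj_vars (Vxy n m) (Vy n m) (seq 0 n).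
Proof. unfold proj_vars, Vxy, Vy. split; intros i Hi; rewrite in_seq; lia. Qed.

Section SmoothExtension.
Context {L : Language} (U : Structure L) (V : nat -> Prop) (A : U -> Prop)
  (lam w : vset U -> R).
Hypothesis Hlam : keisler_measure U V A lam.
Hypothesis Hunique : forall w', keisler_measure U V (everything U) w' ->
  agree U V A w' lam -> agree U V (everything U) w' w.

Lemma smooth_outer c :
  definable U V (everything U) c -> outer (definable U V A) lam c = w c.
Proof.
  intro Hc.
  destruct (outer_extension (definable_algebra U V A) Hlam c) as [m' [Hm' [Hext Hmc]]].
  rewrite <- Hmc. apply Hunique; [| exact Hext | exact Hc].
  apply (fa_probability_sub (fun _ => True)); auto.
Qed.

Lemma smooth_inner c :
  definable U V (everything U) c -> inner (definable U V A) lam c = w c.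
Proof.
  intro Hc.
  destruct (inner_extension (definable_algebra U V A) Hlam c) as [m' [Hm' [Hext Hmc]]].
  rewrite <- Hmc. apply Hunique; [| exact Hext | exact Hc].
  apply (fa_probability_sub (fun _ => True)); auto.
Qed.

Lemma agree_smooth_extension W zs : proj_vars V W zs ->
  forall rho, keisler_measure U W (everything U) rho ->
  agree U W A rho lam -> agree U W (everything U) rho w.
Proof.
  intros Hvars rho Hrho Hag.
  assert (HWV : forall i, W i -> V i) by (intros i Wi; apply (proj2 Hvars i Wi)).
  assert (HA : forall a, A a -> everything U a) by (intros; exact I).
  assert (HDV := definable_algebra U V A).
  assert (HDW := definable_algebra U W (everything U)).
  (* an A-definable subset of S has an A-definable projection onto the W-variables
     that still lies inside S *)
  assert (Hlower : forall S, definable U W (everything U) S ->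
            forall a, definable U V A a -> (forall e, a e -> S e) -> lam a <= rho S).
  { intros S HS a Ha Hsub.
    destruct (definable_projection U V W zs A a Hvars Ha) as [p [Hp [Hap HpS]]].
    apply Rle_trans with (lam p).
    - apply (le_measure HDV Hlam); auto. apply (definable_mono U W V A A); auto.
    - rewrite <- (Hag p Hp).
      apply (le_measure HDW Hrho); [| exact HS | exact (HpS S HS Hsub)].
      apply (definable_mono U W W A (everything U)); auto. }
  intros S HS.
  assert (HSV : definable U V (everything U) S)
    by (apply (definable_mono U W V (everything U) (everything U)); auto).
  apply Rle_antisym.
  - rewrite <- (smooth_outer S HSV). apply (le_outer HDV Hlam). intros d Hd Hsub.
    assert (Hcompl : lam (fun e => ~ d e) <= rho (fun e => ~ S e)).
    { apply Hlower; [apply (algebraC HDW), HS | apply (algebraC HDV), Hd | firstorder]. }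
    rewrite (measureC HDV Hlam d Hd), (measureC HDW Hrho S HS) in Hcompl. lra.
  - rewrite <- (smooth_inner S HSV). apply (inner_le HDV Hlam).
    intros d Hd Hsub. apply Hlower; auto.
Qed.

Lemma smooth_global_restriction W zs rho : proj_vars V W zs ->
  keisler_measure U W (everything U) rho -> agree U W A rho lam ->
  smooth_global U W A rho /\ agree U W (everything U) rho w.
Proof.
  intros Hvars Hrho Hag.
  pose proof (agree_smooth_extension W zs Hvars) as Hext.
  split; [| exact (Hext rho Hrho Hag)].
  intros rho' Hrho' Hag' S HS.
  assert (Hag'_lam : agree U W A rho' lam).
  { intros a Ha. rewrite (Hag' a Ha). apply Hag, Ha. }
  rewrite (Hext rho' Hrho' Hag'_lam S HS), (Hext rho Hrho Hag S HS). reflexivity.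
Qed.

End SmoothExtension.

Theorem proposition4p9 (L : Language) (U : Structure L) (K : Type)
  (HU : monster U K) (A : U -> Prop) (HA : small U K A) (n m : nat)
  (mu nu lam : vset U -> R)
  (Hmu : keisler_measure U (Vx n) (everything U) mu)
  (Hnu : keisler_measure U (Vy n m) (everything U) nu)
  (Hlam : keisler_measure U (Vxy n m) A lam)
  (Hwit : witnesses_E U n m A lam mu nu)
  (Hsmooth : smooth_over U (Vxy n m) A lam) :
  smooth_global U (Vx n) A mu /\ smooth_global U (Vy n m) A nu.
Proof.
  destruct Hsmooth as [[w [Hw Hw_lam]] Hunique].
  destruct Hwit as [Hlam_mu Hwit_y].
  pose proof (fun w' Hw' Hag => Hunique w' w Hw' Hw Hag Hw_lam) as Hunique_w.
  destruct (smooth_global_restriction U _ A lam w Hlam Hunique_w _ _ mu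
              (proj_vars_x n m) Hmu (agree_sym U _ _ _ _ Hlam_mu))
    as [Hmu_smooth Hmu_w].
  split; [exact Hmu_smooth |].
  assert (Hw_nu : agree U (Vy n m) (everything U) w nu)
    by exact (Hwit_y w Hw Hw_lam (agree_sym U _ _ _ _ Hmu_w)).
  apply (smooth_global_restriction U _ A lam w Hlam Hunique_w _ _ nu (proj_vars_y n m) Hnu).
  intros a Ha.
  rewrite <- (agree_mono U _ _ _ _ w nu (fun i Hi => Hi) (fun a _ => I) Hw_nu a Ha).
  exact (agree_mono U _ _ _ _ w lam (fun i Hi => proj2 Hi) (fun a Ha => Ha) Hw_lam a Ha).
Qed.
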